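(* Let $N=[n(i,j)]$, $\mathfrak h$, $\alpha_i$, $\mathcal A$, $F$, $v_1,\dots,v_r$ be as in the context. Suppose $\delta_1,\dots,\delta_r,\delta_{-1},\dots,\delta_{-r}\in\mathrm{Im}\,F$ are such that, with $\mathbf X_i=v_i\delta_i$ and $\mathbf X_{-i}=v_i^{-1}\delta_{-i}$, one has $[\mathbf X_i,\mathbf X_{-i}]=F(H_i)$ for all $i$ and $[\mathbf X_i,\mathbf X_{-j}]=0$ for $i\neq j$. Then also, for all $i\neq j$, $$\mathrm{ad}(\mathbf X_i)^{1-n(i,j)}(\mathbf X_j)=0\quad\text{and}\quad \mathrm{ad}(\mathbf X_{-i})^{1-n(i,j)}(\mathbf X_{-j})=0$$ in $\mathrm{Der}(\mathcal A)$.
   Context: A generalised Cartan matrix is $N=[n(i,j)]_{1\le i,j\le r}$ with $n(i,j)\in\mathbb Z$, $n(i,i)=2$, $n(i,j)\le 0$ for $i\neq j$, and $n(i,j)=0\iff n(j,i)=0$. Let $s$ be the corank of $N$, $\mathfrak h$ the complex vector space with basis $H_1,\dots,H_{r+s}$, and $\alpha_1,\dots,\alpha_r\in\mathfrak h^*$ linearly independent with $\alpha_j(H_i)=n(i,j)$ for $1\le i,j\le r$. $\mathcal A$ is a complex commutative algebra, $\mathrm{Der}(\mathcal A)$ its Lie algebra of derivations (commutator bracket); for $a\in\mathcal A$, $D\in\mathrm{Der}(\mathcal A)$, $aD$ is $b\mapsto aD(b)$. $F:\mathfrak h\to\mathrm{Der}(\mathcal A)$ is a Lie algebra homomorphism ($\mathfrak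 h$ abelian) and $v_1,\dots,v_r\in\mathcal A$ are invertible with $F(H)(v_i)=\alpha_i(H)v_i$ for all $H\in\mathfrak h$. *)

From HB Require Import structures.
From mathcomp Require Import all_boot all_order all_algebra.
From mathcomp Require Import complex reals.
Set Implicit Arguments. Unset Strict Implicit. Unset Printing Implicit Defensive.
Import Order.TTheory GRing.Theory Num.Theory.
Local Open Scope ring_scope.

(* The field of complex numbers, realised as R[i] for R : realType
   (any realType is a complete archimedean ordered field, i.e. the reals). *)
Notation Cplx R := (complex (Real.sort R)).

Definition gen_cartan (r : nat) (N : 'M[int]_r) : Prop :=
  [/\ forall i, N i i = 2%:Z,
      forall i j, i != j -> N i j <= 0 &
      forall i j, (N i j == 0) = (N j i == 0)].

Definition corank (K : fieldType) (r : nat) (N : 'M[int]_r) : nat :=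
  (r - \rank (map_mx (fun z : int => z%:~R : K) N))%N.

Definition is_derivation (K : comNzRingType) (A : comAlgType K) (D : A -> A) : Prop :=
  (forall (c : K) (x y : A), D (c *: x + y) = c *: D x + D y) /\
  (forall x y : A, D (x * y) = x * D y + D x * y).

Definition dbr (K : comNzRingType) (A : comAlgType K) (D1 D2 : A -> A) : A -> A :=
  fun b => D1 (D2 b) - D2 (D1 b).

Definition ad_pow (K : comNzRingType) (A : comAlgType K) (X : A -> A) (m : nat)
  (Y : A -> A) : A -> A := iter m (dbr X) Y.

Definition lmul_der (K : comNzRingType) (A : comAlgType K) (a : A) (D : A -> A) : A -> A :=
  fun b => a * D b.

(* The basis element H_k of h = C^(r+s), realised as row vectors. *)
Definition Hbasis (K : nzRingType) (n : nat) (k : 'I_n) : 'rV[K]_n := delta_mx 0 k.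

From HB Require Import structures.
From mathcomp Require Import all_boot all_order all_algebra.
From mathcomp Require Import complex reals.
From mathcomp Require Import ring.
Import Order.TTheory GRing.Theory Num.Theory.
Local Open Scope ring_scope.
Set Implicit Arguments. Unset Strict Implicit.

(* Write delta_i = F(P_i), delta_-i = F(M_i).  If F(P) w = x w and F(Q) u = y u,
   then [u F(P), w F(Q)] = u w F(x Q - y P); so iterated brackets keep this shape
   and ad(X_i)^k X_j = v_i^k v_j F(c_k P_j - d_k P_i) with explicit c_k, d_k.
   Evaluating [X_i, X_-i] = F(H_i) and [X_i, X_-j] = 0 on the weight vectors v_i,
   v_j gives alpha_i(P_i) alpha_i(M_i) = -1 and leaves four possibilities for
   (alpha_j(P_i), alpha_i(P_j)); each fixes n(i,j) in {0, -1, -2} and makes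
   c_k = d_k = 0 for k = 1 - n(i,j).  The relations for the X_-i follow by the
   symmetry X_i <-> X_-i, v_i <-> v_i^-1, H_i <-> -H_i. *)

Section WeightedDerivations.

Variables (K : comNzRingType) (A : comAlgType K).
Implicit Types (D E : A -> A) (u w x y b : A) (c d : K).

Lemma derivationM D x y : is_derivation D -> D (x * y) = x * D y + D x * y.
Proof. by case=> _ ->. Qed.

Lemma derivation1 D : is_derivation D -> D 1 = 0.
Proof.
move=> hD; have := derivationM 1 1 hD; rewrite !mul1r mulr1 => h.
by apply: (addrI (D 1)); rewrite addr0 -h.
Qed.

Lemma weightM D x y c d : is_derivation D ->
  D x = c *: x -> D y = d *: y -> D (x * y) = (c + d) *: (x * y).
Proof.
move=> hD hx hy.
by rewrite (derivationM _ _ hD) hx hy -scalerAl -scalerAr scalerDl addrC.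
Qed.

Lemma weightX D x c k : is_derivation D ->
  D x = c *: x -> D (x ^+ k) = (k%:R * c) *: x ^+ k.
Proof.
move=> hD hx; elim: k => [|k IH]; first by rewrite expr0 derivation1 // mul0r scale0r.
by rewrite exprS (weightM hD hx IH) -{1}[c]mul1r -mulrDl -natr1 addrC.
Qed.

Lemma weightV D x y c : is_derivation D ->
  x * y = 1 -> D x = c *: x -> D y = - c *: y.
Proof.
move=> hD xy hx.
have : x * D y + D x * y = 0 by rewrite -(derivationM _ _ hD) xy derivation1.
rewrite hx -scalerAl xy => /eqP; rewrite addr_eq0 => /eqP Dxy.
by rewrite -[D y]mul1r -xy mulrAC Dxy mulNr -scalerAl mul1r scaleNr.
Qed.

Lemma dbr_lmul_der D E u w b c d : is_derivation D -> is_derivation E ->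
  (forall b, D (E b) = E (D b)) -> D w = c *: w -> E u = d *: u ->
  dbr (lmul_der u D) (lmul_der w E) b = u * w * (c *: E b - d *: D b).
Proof.
move=> hD hE DE hw hu; rewrite /dbr /lmul_der.
rewrite (derivationM _ _ hD) (derivationM _ _ hE) hw hu DE.
rewrite mulrBr !mulrDr -!scalerAl -!scalerAr !mulrA (mulrC w u) !scalerAl.
by rewrite opprD addrACA subrr add0r.
Qed.

End WeightedDerivations.

Section AbelianDerivationFamily.

Variables (K : comNzRingType) (V : lmodType K) (A : comAlgType K).
Variable F : V -> A -> A.
Hypothesis F_linear : forall (c : K) (H H' : V) (b : A),
  F (c *: H + H') b = c *: F H b + F H' b.
Hypothesis F_derivation : forall H, is_derivation (F H).
Hypothesis F_commute : forall H H' b, dbr (F H) (F H') b = 0.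

Lemma F0 b : F 0 b = 0.
Proof.
have := F_linear 1 0 0 b; rewrite scaler0 addr0 scale1r => h.
by apply: (addrI (F 0 b)); rewrite addr0 -h.
Qed.

Lemma FZ c H b : F (c *: H) b = c *: F H b.
Proof. by rewrite -[c *: H]addr0 F_linear F0 addr0. Qed.

Lemma FN H b : F (- H) b = - F H b.
Proof. by rewrite -[- H]scaleN1r FZ scaleN1r. Qed.

Lemma FB H H' b : F (H - H') b = F H b - F H' b.
Proof. by rewrite -[H in LHS]scale1r F_linear FN scale1r. Qed.

Lemma F_comm H H' b : F H (F H' b) = F H' (F H b).
Proof. by apply/eqP; rewrite -subr_eq0; apply/eqP; exact: F_commute. Qed.

Lemma ad_pow_lmul_der u w P Q p a c k b :
  F P u = p *: u -> F P w = a *: w -> F Q u = c *: u ->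
  ad_pow (lmul_der u (F P)) k (lmul_der w (F Q)) b =
  u ^+ k * w * F ((\prod_(l < k) (a + l%:R * p)) *: Q
                  - (k%:R * c * \prod_(l < k.-1) (a + l%:R * p)) *: P) b.
Proof.
move=> hu hw hc; elim: k b => [|k IH] b.
  by rewrite big_ord0 mulr0n !mul0r scale0r subr0 scale1r expr0 mul1r.
set cQ := \prod_(l < k) (a + l%:R * p) in IH *.
set cP := k%:R * c * \prod_(l < k.-1) (a + l%:R * p) in IH.
have wk : F P (u ^+ k * w) = (a + k%:R * p) *: (u ^+ k * w).
  by rewrite (weightM (F_derivation P) (weightX _ (F_derivation P) hu) hw) addrC.
have uR : F (cQ *: Q - cP *: P) u = (cQ * c - cP * p) *: u.
  by rewrite FB !FZ hc hu !scalerA scalerBl.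
transitivity
  (dbr (lmul_der u (F P)) (lmul_der (u ^+ k * w) (F (cQ *: Q - cP *: P))) b).
  by rewrite /dbr /lmul_der -!IH.
rewrite (dbr_lmul_der _ (F_derivation _) (F_derivation _) (F_comm _ _) wk uR).
rewrite !FB !FZ exprS !mulrA; congr (_ * _).
rewrite scalerBr !scalerA -addrA -opprD -scalerDl big_ord_recr /= -/cQ.
congr (_ *: _ - _ *: _); rewrite /cP /cQ; first by rewrite mulrC.
(* the recursion d_(k+1) = (a + k p) d_k + c c_k - p d_k has the stated solution *)
by case: k {IH wk uR cQ cP} => [|k] /=; rewrite ?big_ord0 ?big_ord_recr /=; ring.
Qed.

Lemma ad_pow_lmul_der_eq0 u w P Q p a c k b :
  F P u = p *: u -> F P w = a *: w -> F Q u = c *: u ->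
  \prod_(l < k) (a + l%:R * p) = 0 ->
  k%:R * c * \prod_(l < k.-1) (a + l%:R * p) = 0 ->
  ad_pow (lmul_der u (F P)) k (lmul_der w (F Q)) b = 0.
Proof.
move=> hu hw hc cQ0 cP0.
by rewrite (ad_pow_lmul_der k b hu hw hc) cQ0 cP0 !scale0r subr0 F0 mulr0.
Qed.

End AbelianDerivationFamily.

Lemma scaler_unit_inj (K : fieldType) (A : lalgType K) (x y : A) (c d : K) :
  x * y = 1 -> c *: x = d *: x -> c = d.
Proof.
move=> xy /eqP; rewrite -subr_eq0 -scalerBl scaler_eq0 subr_eq0.
case/orP=> [/eqP //|/eqP x0].
by move: (oner_neq0 A); rewrite -xy x0 mul0r eqxx.
Qed.

Lemma mul_add_eq0_cases (K : idomainType) (x y z t : K) : y != 0 -> t != 0 ->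
  x * y + z * x = 0 -> x * z + z * t = 0 ->
  (x = 0 /\ z = 0) \/ (x = - t /\ z = - y).
Proof.
move=> y0 t0; rewrite (mulrC z x) -mulrDr (mulrC x z) -mulrDr => /eqP.
rewrite mulf_eq0 => /orP[/eqP x0|]; rewrite ?x0 ?add0r.
  by move=> /eqP; rewrite mulf_eq0 (negbTE t0) orbF => /eqP; left.
rewrite addrC addr_eq0 => /eqP zy /eqP; rewrite zy mulf_eq0 oppr_eq0 (negbTE y0) /=.
by rewrite addr_eq0 => /eqP; right.
Qed.

Section ChevalleyGenerators.

Variables (K : numFieldType) (V : lmodType K) (A : comAlgType K).
Variable F : V -> A -> A.
Hypothesis F_linear : forall (c : K) (H H' : V) (b : A),
  F (c *: H + H') b = c *: F H b + F H' b.
Hypothesis F_derivation : forall H, is_derivation (F H).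
Hypothesis F_commute : forall H H' b, dbr (F H) (F H') b = 0.
Variables (I : eqType) (N : I -> I -> int).
Hypothesis N_diag : forall i, N i i = 2%:Z.

Definition chevalley_generators (u w : I -> A) (al : I -> V -> K) (P M H : I -> V) :=
  [/\ forall i, u i * w i = 1,
      forall i X, F X (u i) = al i X *: u i,
      forall i j, al j (H i) = (N i j)%:~R,
      forall i b,
        dbr (lmul_der (u i) (F (P i))) (lmul_der (w i) (F (M i))) b = F (H i) b &
      forall i j, i != j -> forall b,
        dbr (lmul_der (u i) (F (P i))) (lmul_der (w j) (F (M j))) b = 0].

Section Weights.

Variables (u w : I -> A) (al : I -> V -> K) (P M H : I -> V).
Hypothesis gens : chevalley_generators u w al P M H.

Lemma chevalley_weightV i X : F X (w i) = - al i X *: w i.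
Proof. by case: gens => uw u_weight _ _ _; exact: weightV (uw i) (u_weight i X). Qed.

Lemma chevalley_weight_coroot i k :
  al k (H i) = - al i (P i) * al k (M i) - al i (M i) * al k (P i).
Proof.
case: gens => uw u_weight _ sl2 _; apply: (scaler_unit_inj (uw k)).
rewrite -u_weight -sl2 (dbr_lmul_der _ (F_derivation _) (F_derivation _)
  (F_comm F_commute _ _) (chevalley_weightV i _) (u_weight i _)).
by rewrite uw mul1r !u_weight !scalerA scalerBl.
Qed.

Lemma chevalley_weight_orth i j k : i != j ->
  al j (P i) * al k (M j) + al i (M j) * al k (P i) = 0.
Proof.
case: gens => uw u_weight _ _ orth ij; apply/eqP; rewrite -oppr_eq0; apply/eqP.
apply: (scaler_unit_inj (uw k)); rewrite scale0r.
have uiwj : (u i * w j) * (w i * u j) = 1.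
  by rewrite mulrACA uw (mulrC (w j)) uw mulr1.
have := orth i j ij (u k).
rewrite (dbr_lmul_der _ (F_derivation _) (F_derivation _)
  (F_comm F_commute _ _) (chevalley_weightV j _) (u_weight i _)).
rewrite !u_weight !scalerA -scalerBl mulNr opprD => h.
by rewrite -[LHS]mul1r -uiwj mulrAC h mul0r.
Qed.

Lemma chevalley_generators_swap :
  chevalley_generators w u (fun i X => - al i X) M P (fun i => - H i).
Proof.
case: gens => uw u_weight al_H sl2 orth; split.
- by move=> i; rewrite mulrC.
- exact: chevalley_weightV.
- move=> i j; rewrite -al_H -[RHS]opprK; congr (- _).
  apply: (scaler_unit_inj (uw j)).
  by rewrite -u_weight (FN F_linear) u_weight scaleNr.
- by move=> i b; rewrite (FN F_linear) -sl2 /dbr opprB.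
- move=> i j ij b; apply/eqP; rewrite -oppr_eq0 -(orth j i _ b) 1?eq_sym //.
  by rewrite /dbr opprB.
Qed.

Lemma chevalley_weight_PM i : al i (P i) * al i (M i) = -1.
Proof.
have := chevalley_weight_coroot i i; case: gens => _ _ al_H _ _.
rewrite al_H N_diag => e.
have : (al i (P i) * al i (M i) + 1) * 2 =
    (2%:Z)%:~R - (- al i (P i) * al i (M i) - al i (M i) * al i (P i)) by ring.
by rewrite e subrr => /eqP; rewrite mulf_eq0 pnatr_eq0 orbF addr_eq0 => /eqP.
Qed.

Lemma chevalley_weight_neq0 i : al i (P i) != 0 /\ al i (M i) != 0.
Proof.
have pm := chevalley_weight_PM i.
by split; apply/eqP => e0; move: pm; rewrite e0 ?mul0r ?mulr0 => /eqP;
  rewrite eq_sym oppr_eq0 oner_eq0.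
Qed.

End Weights.

Lemma serre_relation u w al P M H : chevalley_generators u w al P M H ->
  forall i j, i != j -> forall b,
  ad_pow (lmul_der (u i) (F (P i))) `|1 - N i j|%N (lmul_der (u j) (F (P j))) b = 0.
Proof.
move=> gens i j ij b; have [_ u_weight al_H _ _] := gens.
have ji : j != i by rewrite eq_sym.
have pm := chevalley_weight_PM gens i; have nz := chevalley_weight_neq0 gens.
have nij := chevalley_weight_coroot gens i j; rewrite al_H in nij.
have orth := chevalley_weight_orth gens.
have serre k : `|1 - N i j|%N = k ->
    \prod_(l < k) (al j (P i) + l%:R * al i (P i)) = 0 ->
    k%:R * al i (P j) * \prod_(l < k.-1) (al j (P i) + l%:R * al i (P i)) = 0 ->
    ad_pow (lmul_der (u i) (F (P i))) `|1 - N i j|%N (lmul_der (u j) (F (P j))) b = 0.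
  move=> <-; exact: (ad_pow_lmul_der_eq0 F_linear F_derivation F_commute b
    (u_weight i (P i)) (u_weight j (P i)) (u_weight i (P j))).
have [[a0 _]|[ap _]] :=
  mul_add_eq0_cases (nz j).2 (nz i).1 (orth i j j ij) (orth i j i ij);
have [[c0 a'0]|[cpj a'm]] :=
  mul_add_eq0_cases (nz i).2 (nz j).1 (orth j i i ji) (orth j i j ji).
- have nij0 : N i j = 0 by apply: (@intr_inj K); rewrite nij a0 a'0; ring.
  apply: (serre 1%N); rewrite ?nij0 ?a0 ?c0 // ?big_ord_recr ?big_ord0 /=; ring.
- have nij1 : N i j = -1 by apply: (@intr_inj K); rewrite nij a0 a'm; ring: pm.
  apply: (serre 2%N); rewrite ?nij1 ?a0 ?cpj // ?big_ord_recr ?big_ord0 /=; ring.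
- have nij1 : N i j = -1 by apply: (@intr_inj K); rewrite nij ap a'0; ring: pm.
  apply: (serre 2%N); rewrite ?nij1 ?ap ?c0 // ?big_ord_recr ?big_ord0 /=; ring.
- have nij2 : N i j = -2 by apply: (@intr_inj K); rewrite nij ap a'm; ring: pm.
  apply: (serre 3%N); rewrite ?nij2 ?ap ?cpj // ?big_ord_recr ?big_ord0 /=; ring.
Qed.

End ChevalleyGenerators.

Lemma sum_delta_mx (R : pzSemiRingType) n (c : 'I_n) (f : 'I_n -> R) :
  \sum_l (delta_mx 0 c : 'rV[R]_n) 0 l * f l = f c.
Proof.
by rewrite (bigD1 c) //= big1 ?addr0 => [|l /negbTE lc];
  rewrite mxE !eqxx ?lc /= ?mul1r ?mul0r.
Qed.

Theorem theorem3p12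
  (R : realType) (r s : nat) (N : 'M[int]_r)
  (hN : gen_cartan N)
  (hs : s = corank (Cplx R) N)
  (* alpha_j (H) = \sum_k H_k * a j k : linear functionals on h = C^(r+s) *)
  (a : 'M[Cplx R]_(r, r + s))
  (ha_indep : row_free a)
  (ha_cartan : forall i j : 'I_r, a j (lshift s i) = (N i j)%:~R)
  (A : comAlgType (Cplx R))
  (F : 'rV[Cplx R]_(r + s) -> A -> A)
  (hF_lin : forall (c : Cplx R) (H H' : 'rV[Cplx R]_(r + s)) (b : A),
      F (c *: H + H') b = c *: F H b + F H' b)
  (hF_der : forall H, is_derivation (F H))
  (hF_hom : forall H H' (b : A), dbr (F H) (F H') b = 0)
  (v vinv : 'I_r -> A)
  (hv_inv : forall i, v i * vinv i = 1)
  (hv_eig : forall (H : 'rV[Cplx R]_(r + s)) (i : 'I_r),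
      F H (v i) = (\sum_k H 0 k * a i k) *: v i)
  (dp dm : 'I_r -> A -> A)
  (hdp : forall i, exists H, dp i = F H)
  (hdm : forall i, exists H, dm i = F H)
  (hXX : forall i (b : A),
      dbr (lmul_der (v i) (dp i)) (lmul_der (vinv i) (dm i)) b
        = F (Hbasis (Cplx R) (lshift s i)) b)
  (hXX0 : forall i j, i != j -> forall b : A,
      dbr (lmul_der (v i) (dp i)) (lmul_der (vinv j) (dm j)) b = 0) :
  forall i j : 'I_r, i != j ->
    (forall b : A,
       ad_pow (lmul_der (v i) (dp i)) `|1 - N i j|%N (lmul_der (v j) (dp j)) b = 0) /\
    (forall b : A,
       ad_pow (lmul_der (vinv i) (dm i)) `|1 - N i j|%N (lmul_der (vinv j) (dm j)) b = 0).
Proof.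
move=> i j ij.
have [P hP] := fin_all_exists hdp; have [M hM] := fin_all_exists hdm.
have gens : chevalley_generators F N v vinv (fun k X => \sum_l X 0 l * a k l) P M
    (fun k => Hbasis (Cplx R) (lshift s k)).
  split=> //.
  - by move=> k l; rewrite sum_delta_mx ha_cartan.
  - by move=> k x; rewrite -hP -hM hXX.
  - by move=> k l kl x; rewrite -hP -hM hXX0.
have N_diag : forall k, N k k = 2%:Z by case: hN.
rewrite !hP !hM; split.
- exact (serre_relation hF_lin hF_der hF_hom N_diag gens ij).
- exact (serre_relation hF_lin hF_der hF_hom N_diag
    (chevalley_generators_swap hF_lin hF_der gens) ij).
Qed.
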